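(* Let $\lambda_{\max}=1$ and let $F:[0,1]\to\mathbb{R}_+$ be continuously differentiable with $F(0)=0$, such that $F(x)<F^\star$ for all $x\in[0,1)$ and $F'(1)>0$. Then there exist constants $c>0$ and $\varepsilon_0>0$ (depending on $F$) such that for every $\varepsilon\in(0,\varepsilon_0]$ and every stable control policy $\lambda:\mathbb{Z}_+\to[0,1]$ with regret $R(\lambda)\le\varepsilon$, we have $\mathbb{E}_\pi[\bar q]\ge c/\varepsilon$. That is, $q^\star(\varepsilon)=\Omega(1/\varepsilon)$.
   Context: A control policy is a function $\lambda:\mathbb{Z}_+\to[0,\lambda_{\max}]$; it defines a continuous-time birth–death chain on $\mathbb{Z}_+$ with rate $\lambda(q)$ from $q$ to $q+1$ and rate $1$ from $q$ to $q-1$ ($q\ge1$). Let $\mathcal S$ be the set of states reachable from $0$. The policy is stable if $\sum_{i\in\mathcal S}\prod_{q=0}^{i}\lambda(q)<\infty$ (positive recurrence on $\mathcal S$); then $\pi$ is the stationary distribution and $\bar q\sim\pi$. Define $F^\star=\sup\{\mathbb{E}_\alpha[F(X)]:\alpha$ a probability measure on $[0,\lambda_{\max}]$, $X\sim\alpha$, $\mathbb{E}_\alpha[X]\le1\}$, the regret $R(\lambda)=F^\star-\mathbb{E}_\pi[F(\lambda(\bar q))]$, and $q^\star(\varepsilon)=\inf\{\mathbb{E}_\pi[\bar q]: \lambda \text{ stable},\ R(\lambda)\le\varepsilon\}$. *)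

From HB Require Import structures.
From mathcomp Require Import all_boot all_order all_algebra.
From mathcomp Require Import all_classical all_reals all_analysis.
Set Implicit Arguments. Unset Strict Implicit. Unset Printing Implicit Defensive.
Import Order.TTheory GRing.Theory Num.Theory.
Import numFieldNormedType.Exports.
Local Open Scope classical_set_scope.
Local Open Scope ring_scope.

Section Defs.
Variable R : realType.

Definition C1_on01 (F F' : R -> R) : Prop :=
  (forall x : R, (0 <= x <= 1)%R ->
     (fun h : R => h^-1 * (F (x + h) - F x))%R
       @ within [set h : R | (0 <= x + h <= 1)%R] (0 : R)^' --> F' x)
  /\ {within `[0%R, 1%R]%classic, continuous F'}.

Definition Fstar (F : R -> R) : \bar R :=
  ereal_sup [set (\int[P]_(x in `[0%R, 1%R]%classic) (F x)%:E)%E |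
             P in [set P : probability R R |
                   P `[0%R, 1%R]%classic = 1%E /\ (\int[P]_(x in `[0%R, 1%R]%classic) x%:E <= 1%:E)%E]].

Definition policy (lam : nat -> R) : Prop := forall q, (0 <= lam q <= 1)%R.

(* unnormalized stationary weight of state i : prod_{q < i} lambda(q)
   (zero exactly outside the set S of states reachable from 0) *)
Definition weight (lam : nat -> R) (i : nat) : R := (\prod_(q < i) lam q)%R.

(* stability: sum_{i in S} prod_{q=0}^{i} lambda(q) < oo
   (terms with i not in S vanish, so the sum may range over all i) *)
Definition stable (lam : nat -> R) : Prop :=
  (\sum_(0 <= i <oo) (\prod_(q < i.+1) lam q)%:E < +oo)%E.

Definition normconst (lam : nat -> R) : R :=
  fine (\sum_(0 <= i <oo) (weight lam i)%:E).

Definition pi_st (lam : nat -> R) (i : nat) : R :=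
  (weight lam i / normconst lam)%R.

Definition Epi (lam : nat -> R) (g : nat -> R) : \bar R :=
  \sum_(0 <= i <oo) (pi_st lam i * g i)%:E.

Definition regret (F : R -> R) (lam : nat -> R) : \bar R :=
  (Fstar F - Epi lam (fun i => F (lam i)))%E.

Definition Eq (lam : nat -> R) : \bar R := Epi lam (fun i => i%:R).

End Defs.

From HB Require Import structures.
From mathcomp Require Import all_boot all_order all_algebra.
From mathcomp Require Import all_classical all_reals all_analysis.
From mathcomp Require Import lra ring.
Import Order.TTheory GRing.Theory Num.Theory.
Import numFieldNormedType.Exports.
Local Open Scope classical_set_scope.
Local Open Scope ring_scope.

(* By C^1-regularity, [F x < F^*] on [0,1) and [F'(1) > 0], the graph of [F]
   lies below a line [T - k (1 - x)] with [k > 0] and a real [T <= F^*].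
   With the unnormalised weights [w q = prod_(p < q) lambda(p)] of the chain
   and their total [Z], the flow [w q (1 - lambda(q)) = w q - w (q+1)]
   telescopes to [1], so [E_pi[F(lambda)] <= T - k / Z]: the regret is at
   least [k / Z].  On the other hand the weights lie in [0,1], so a mass of
   [Z/2] needs about [Z/2] states and [E_pi[q] >= Z / 16] once [Z >= 4].
   Regret at most [eps] thus forces [Z >= k / eps] and
   [E_pi[q] >= k / (16 eps)]. *)

Section C1_on01.
Context {R : realType} {F F' : R -> R}.
Hypothesis FC1 : C1_on01 F F'.

Lemma C1_on01_quotientP x : 0 <= x <= 1 ->
  forall e, 0 < e -> exists2 d, 0 < d &
    forall h, `|h| < d -> h != 0 -> 0 <= x + h <= 1 ->
      `|F' x - h^-1 * (F (x + h) - F x)| < e.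
Proof.
move=> x01 e e0.
have /cvgrPdist_lt/(_ e e0)/nbhs_ballP[d /= d0 Hd] := FC1.1 x x01.
by exists d => // h hd h0 xh01; apply: Hd => //; rewrite /ball /= sub0r normrN.
Qed.

Lemma C1_on01_lipschitz_near x : 0 <= x <= 1 ->
  exists2 d, 0 < d & forall y, 0 <= y <= 1 -> `|y - x| < d ->
    `|F y - F x| <= (`|F' x| + 1) * `|y - x|.
Proof.
move=> x01; have [d d0 Hd] := C1_on01_quotientP x x01 1 ltr01.
exists d => // y y01 yxd.
have [->|yx] := eqVneq y x; first by rewrite !subrr normr0 mulr0.
have yx0 : y - x != 0 by rewrite subr_eq0.
have := Hd _ yxd yx0; rewrite addrC subrK => /(_ y01).
set q := (y - x)^-1 * (F y - F x) => Fq.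
have -> : F y - F x = (y - x) * q by rewrite mulrA mulfV // mul1r.
rewrite normrM mulrC ler_wpM2r //.
have := ler_normB (F' x) (F' x - q); rewrite opprB addrC subrK => qF.
by rewrite (le_trans qF) // lerD2l ltW.
Qed.

Lemma C1_on01_continuityP x : 0 <= x <= 1 ->
  forall e, 0 < e -> exists2 d, 0 < d &
    forall y, 0 <= y <= 1 -> `|y - x| < d -> `|F y - F x| < e.
Proof.
move=> x01 e e0; have [d d0 Hd] := C1_on01_lipschitz_near x x01.
set K := `|F' x| + 1; have K0 : 0 < K by rewrite ltr_pwDr.
exists (Num.min d (e / K)) => [|y y01]; first by rewrite lt_min d0 divr_gt0.
rewrite lt_min => /andP[yxd yxe]; rewrite (le_lt_trans (Hd y y01 yxd)) //.
by rewrite mulrC -ltr_pdivlMr.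
Qed.

Lemma C1_on01_continuous : {within `[0, 1], continuous F}.
Proof.
apply/subspace_continuousP => x /=; rewrite in_itv /= => x01.
apply/cvgrPdist_lt => e e0; apply/nbhs_ballP.
have [d d0 Hd] := C1_on01_continuityP x x01 e e0.
exists d => // y; rewrite /ball /= in_itv /= => xyd y01.
by rewrite distrC Hd // distrC.
Qed.

Lemma C1_on01_le_at1 r : (forall x, 0 <= x < 1 -> F x < r) -> F 1 <= r.
Proof.
move=> Fr; apply/ler_addgt0Pr => e e0.
have one01 : 0 <= (1 : R) <= 1 by rewrite ler01 lexx.
have [d d0 Hd] := C1_on01_continuityP 1 one01 e e0.
set h := Num.min (d / 2) (1 / 2).
have h0 : 0 < h by rewrite lt_min; apply/andP; split; lra.
have [hd h1] : h <= d / 2 /\ h <= 1 / 2 by rewrite !ge_min !lexx orbT.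
have y01 : 0 <= 1 - h <= 1 by apply/andP; split; lra.
have y1 : 0 <= 1 - h < 1 by apply/andP; split; lra.
have hd' : h < d by lra.
clearbody h.
have := Hd _ y01; rewrite addrAC subrr add0r normrN gtr0_norm // => /(_ hd').
have := Fr _ y1; have := ler_norm (F 1 - F (1 - h)); rewrite distrC; lra.
Qed.

Lemma C1_on01_slope_near1 : 0 < F' 1 ->
  exists2 a, a < 1 & forall x, 0 <= x -> a < x <= 1 ->
    F x <= F 1 - F' 1 / 2 * (1 - x).
Proof.
move=> F'1; have one01 : 0 <= (1 : R) <= 1 by rewrite ler01 lexx.
have [d d0 Hd] :=
  C1_on01_quotientP 1 one01 (F' 1 / 2) (divr_gt0 F'1 (ltr0Sn _ 1)).
exists (1 - d) => [|x x0 /andP[dx x1]]; first lra.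
have [->|x1'] := eqVneq x 1; first by rewrite subrr mulr0 subr0.
have x1n : x - 1 < 0 by rewrite subr_lt0 lt_neqAle x1' x1.
have x1d : `|x - 1| < d by rewrite ltr0_norm //; lra.
have := Hd (x - 1) x1d (ltr0_neq0 x1n).
rewrite addrCA subrr addr0 x0 x1 => /(_ isT).
set q := (x - 1)^-1 * (F x - F 1).
rewrite ltr_norml => /andP[_ qF].
have -> : F x = F 1 + (x - 1) * q.
  by rewrite mulrA mulfV ?lt_eqF // mul1r addrC subrK.
have : (x - 1) * q <= (x - 1) * (F' 1 / 2) by rewrite ler_nM2l //; lra.
lra.
Qed.

Lemma C1_on01_linear_gap T : (forall x, 0 <= x < 1 -> F x < T) -> 0 < F' 1 ->
  exists2 k, 0 < k & forall x, 0 <= x <= 1 -> F x <= T - k * (1 - x).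
Proof.
move=> FT F'1; have F1T := C1_on01_le_at1 T FT.
have [a a1 Fa] := C1_on01_slope_near1 F'1.
set b := Num.max 0 a.
have [b0 b1] : 0 <= b /\ b < 1 by rewrite le_max lexx gt_max ltr01 a1.
have sub : `[0, b] `<=` `[0, 1].
  by move=> x /=; rewrite !in_itv /= => /andP[-> xb]; rewrite (le_trans xb) ?ltW.
have [c /[!in_itv]/= /andP[c0 cb] Fc] :=
  EVT_max b0 (continuous_subspaceW sub C1_on01_continuous).
have FcT : F c < T by apply: FT; rewrite c0 (le_lt_trans cb).
exists (Num.min (F' 1 / 2) (T - F c)) => [|x /andP[x0 x1]].
  by rewrite lt_min divr_gt0 // subr_gt0.
set k := Num.min _ _.
have [k1 k2] : k <= F' 1 / 2 /\ k <= T - F c by rewrite !ge_min !lexx orbT.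
have k0 : 0 < k by rewrite lt_min divr_gt0 // subr_gt0.
have [xb|bx] := lerP x b.
- have : F x <= F c by apply: Fc; rewrite in_itv /= x0 xb.
  have : k * (1 - x) <= k * 1 by apply: ler_wpM2l; [exact: ltW | lra].
  lra.
- have ax : a < x by rewrite (le_lt_trans _ bx) // le_max lexx orbT.
  have := Fa x x0; rewrite ax x1 => /(_ isT).
  have : k * (1 - x) <= F' 1 / 2 * (1 - x) by apply: ler_wpM2r; lra.
  lra.
Qed.

Lemma C1_on01_below_Fstar : (forall x, 0 <= x < 1 -> ((F x)%:E < Fstar F)%E) ->
  exists2 T, (T%:E <= Fstar F)%E & forall x, 0 <= x < 1 -> F x < T.
Proof.
move=> FFs; case Fs : (Fstar F) => [r| |].
- by exists r => // x /FFs; rewrite Fs lte_fin.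
- have [c _ Fc] := EVT_max ler01 C1_on01_continuous.
  exists (F c + 1) => [|x /andP[x0 x1]]; first by rewrite leey.
  have : F x <= F c by apply: Fc; rewrite in_itv /= x0 ltW.
  lra.
- by have := FFs 0; rewrite lexx ltr01 Fs ltNge leNye => /(_ isT).
Qed.

End C1_on01.

Lemma sum_le_nneseries_EFin {R : realType} (u : nat -> R) n :
  (forall i, 0 <= u i) ->
  ((\sum_(0 <= i < n) u i)%:E <= \sum_(0 <= i <oo) (u i)%:E)%E.
Proof.
by move=> u0; rewrite -sumEFin; apply: nneseries_lim_ge => i _ _; rewrite lee_fin.
Qed.

Lemma nneseries_EFin_le {R : realType} (u : nat -> R) (c : \bar R) :
  (forall i, 0 <= u i) -> (forall n, ((\sum_(0 <= i < n) u i)%:E <= c)%E) ->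
  (\sum_(0 <= i <oo) (u i)%:E <= c)%E.
Proof.
move=> u0 uc; apply: lime_le.
  by apply: is_cvg_nneseries => i _ _; rewrite lee_fin.
by apply: nearW => n; rewrite /= sumEFin.
Qed.

Lemma sum_mul_subr1_le_moment {R : realFieldType} (w : nat -> R) n :
  (forall i, 0 <= w i <= 1) ->
  (\sum_(0 <= i < n) w i) * (\sum_(0 <= i < n) w i - 1)
    <= 2 * \sum_(0 <= i < n) (i%:R * w i).
Proof.
move=> w01; suff : \sum_(0 <= i < n) w i <= n%:R /\
    (\sum_(0 <= i < n) w i) * (\sum_(0 <= i < n) w i - 1)
      <= 2 * \sum_(0 <= i < n) (i%:R * w i) by case.
elim: n => [|n [IH1 IH2]]; first by rewrite !big_geq // mul0r mulr0.
rewrite !big_nat_recr //= -natr1.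
have /andP[w0 w1] := w01 n.
set A := \sum_(0 <= i < n) w i in IH1 IH2 *.
set B := \sum_(0 <= i < n) (i%:R * w i) in IH2 *.
split; first lra.
(* The left side grows by [w n (2 A + w n - 1)], the right side by [2 n w n]. *)
have : 0 <= w n * (2 * n%:R - 2 * A - w n + 1) by rewrite mulr_ge0 //; lra.
nra.
Qed.

Section stationary_distribution.
Context {R : realType} {lam : nat -> R}.

Lemma weight0 : weight lam 0 = 1.
Proof. by rewrite /weight big_ord0. Qed.

Lemma weightS i : weight lam i.+1 = weight lam i * lam i.
Proof. by rewrite /weight big_ord_recr. Qed.

Lemma sum_weight_mul1B n :
  \sum_(0 <= i < n) weight lam i * (1 - lam i) = 1 - weight lam n.
Proof.
rewrite -[1 in RHS]weight0 -opprB -telescope_sumr // -sumrN.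
by apply: eq_bigr => i _; rewrite weightS opprB mulrBr mulr1.
Qed.

Hypothesis lam_policy : policy lam.

Lemma weight_ge0 i : 0 <= weight lam i.
Proof. by rewrite /weight prodr_ge0 // => q _; have /andP[] := lam_policy q. Qed.

Lemma weight_le1 i : weight lam i <= 1.
Proof. by apply: prodr_ile1 => q _; apply: lam_policy. Qed.

Lemma nneseries_weight_ge1 : (1%:E <= \sum_(0 <= i <oo) (weight lam i)%:E)%E.
Proof.
have := sum_le_nneseries_EFin (weight lam) 1 weight_ge0.
by rewrite big_nat1 weight0.
Qed.

Hypothesis lam_stable : stable lam.

Lemma nneseries_weight_lt_pinfty :
  (\sum_(0 <= i <oo) (weight lam i)%:E < +oo)%E.
Proof.
apply: (@le_lt_trans _ _ (1%:E + \sum_(0 <= i <oo) (weight lam i.+1)%:E)%E).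
  apply: nneseries_EFin_le => [|n]; first exact: weight_ge0.
  apply: (@le_trans _ _ (\sum_(0 <= i < n.+1) weight lam i)%:E).
    by rewrite lee_fin big_nat_recr //= lerDl weight_ge0.
  rewrite big_nat_recl // weight0 EFinD leeD2l //.
  exact: sum_le_nneseries_EFin _ n (fun i => weight_ge0 i.+1).
by rewrite lte_add_pinfty // ltry.
Qed.

Lemma nneseries_weightE :
  (\sum_(0 <= i <oo) (weight lam i)%:E)%E = (normconst lam)%:E.
Proof.
rewrite /normconst fineK // ge0_fin_numE ?nneseries_weight_lt_pinfty //.
exact: le_trans nneseries_weight_ge1.
Qed.

Lemma normconst_gt0 : 0 < normconst lam.
Proof.
by rewrite -lte_fin -nneseries_weightE (lt_le_trans _ nneseries_weight_ge1) ?lte01.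
Qed.

Lemma sum_weight_le_normconst n :
  \sum_(0 <= i < n) weight lam i <= normconst lam.
Proof.
by rewrite -lee_fin -nneseries_weightE; apply: sum_le_nneseries_EFin weight_ge0.
Qed.

Lemma pi_st_ge0 i : 0 <= pi_st lam i.
Proof. by rewrite divr_ge0 ?weight_ge0 ?ltW ?normconst_gt0. Qed.

Lemma Epi_le_affine (F : R -> R) (T k : R) :
  (forall x, 0 <= x <= 1 -> 0 <= F x) ->
  (forall x, 0 <= x <= 1 -> F x <= T - k * (1 - x)) ->
  (Epi lam (fun i => F (lam i)) <= (T - k / normconst lam)%:E)%E.
Proof.
move=> F0 FT; set Z := normconst lam; have Z0 : 0 < Z := normconst_gt0.
have [T0 kT] : 0 <= T /\ k <= T.
  have x0 : 0 <= (0 : R) <= 1 by rewrite lexx ler01.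
  have x1 : 0 <= (1 : R) <= 1 by rewrite ler01 lexx.
  have := F0 _ x0; have := FT _ x0; have := F0 _ x1; have := FT _ x1.
  rewrite subrr subr0 mulr0 mulr1; lra.
apply: nneseries_EFin_le => [i|n]; first by rewrite mulr_ge0 ?pi_st_ge0 ?F0.
have pi_le i :
    pi_st lam i * F (lam i) <= weight lam i * (T - k * (1 - lam i)) / Z.
  rewrite /pi_st -/Z mulrAC; apply: ler_wpM2r; first by rewrite invr_ge0 ltW.
  by apply: ler_wpM2l; [exact: weight_ge0 | exact: FT].
rewrite lee_fin (le_trans (ler_sum _ (fun i _ => pi_le i))) // -mulr_suml.
have -> : \sum_(0 <= i < n) weight lam i * (T - k * (1 - lam i)) =
    T * \sum_(0 <= i < n) weight lam i - k * (1 - weight lam n).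
  rewrite -sum_weight_mul1B !mulr_sumr -sumrB.
  by apply: eq_bigr => i _; ring.
rewrite ler_pdivrMr // mulrBl mulfVK ?gt_eqF //.
have := sum_weight_le_normconst n.+1; rewrite big_nat_recr //=.
set A := \sum_(0 <= i < n) weight lam i => AZ.
have : T * (A + weight lam n) <= T * Z by rewrite ler_wpM2l.
have : k * weight lam n <= T * weight lam n by rewrite ler_wpM2r ?weight_ge0.
lra.
Qed.

Lemma regret_ge_div_normconst (F : R -> R) (T k : R) :
  (T%:E <= Fstar F)%E ->
  (forall x, 0 <= x <= 1 -> 0 <= F x) ->
  (forall x, 0 <= x <= 1 -> F x <= T - k * (1 - x)) ->
  ((k / normconst lam)%:E <= regret F lam)%E.
Proof.
move=> TF F0 FT; have := leeB TF (Epi_le_affine F T k F0 FT).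
by rewrite -EFinD opprB addrC subrK.
Qed.

Lemma Eq_ge_normconst :
  4 <= normconst lam -> ((normconst lam / 16)%:E <= Eq lam)%E.
Proof.
move=> Z4; set Z := normconst lam in Z4 *; have Z0 : 0 < Z := normconst_gt0.
have [N ZA] : exists N, Z / 2 <= \sum_(0 <= i < N) weight lam i.
  apply: contrapT => /forallNP AZ.
  have : (\sum_(0 <= i <oo) (weight lam i)%:E <= (Z / 2)%:E)%E.
    apply: nneseries_EFin_le weight_ge0 _ => n.
    by rewrite lee_fin ltW // ltNge; apply/negP/AZ.
  by rewrite nneseries_weightE -/Z lee_fin; lra.
have w01 i : 0 <= weight lam i <= 1 by rewrite weight_ge0 weight_le1.
have := sum_mul_subr1_le_moment (weight lam) N w01.
set A := \sum_(0 <= i < N) weight lam i in ZA *.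
set B := \sum_(0 <= i < N) (i%:R * weight lam i) => AB.
have BZ : Z / 16 <= B / Z.
  rewrite ler_pdivlMr //.
  have : Z * Z / 4 <= A * A by nra.
  nra.
apply: le_trans (sum_le_nneseries_EFin _ N _) => [|i]; last first.
  by rewrite mulr_ge0 ?pi_st_ge0.
suff -> : \sum_(0 <= i < N) pi_st lam i * i%:R = B / Z by rewrite lee_fin.
by rewrite /B mulr_suml; apply: eq_bigr => i _; rewrite /pi_st -/Z; ring.
Qed.

End stationary_distribution.

Theorem proposition5p1 (R : realType) (F F' : R -> R) :
  C1_on01 F F' ->
  (forall x : R, 0 <= x <= 1 -> 0 <= F x) ->
  F 0 = 0 ->
  (forall x : R, 0 <= x < 1 -> ((F x)%:E < Fstar F)%E) ->
  0 < F' 1 ->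
  exists c : R, exists eps0 : R, 0 < c /\ 0 < eps0 /\
    forall (eps : R) (lam : nat -> R),
      0 < eps <= eps0 ->
      policy lam -> stable lam ->
      (regret F lam <= eps%:E)%E ->
      ((c / eps)%:E <= Eq lam)%E.
Proof.
move=> FC1 F0 _ FFs F'1.
have [T TFs FT] := C1_on01_below_Fstar FC1 FFs.
have [k k0 FTk] := C1_on01_linear_gap FC1 T FT F'1.
exists (k / 16), (k / 4); do 2![split; first lra].
move=> eps lam /andP[eps0 eps_le] Plam Slam reg.
have Z0 := normconst_gt0 Plam Slam.
have kZ : k <= eps * normconst lam.
  rewrite -ler_pdivrMr // -lee_fin (le_trans _ reg) //.
  exact: regret_ge_div_normconst Plam Slam F T k TFs F0 FTk.
have Z4 : 4 <= normconst lam by nra.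
apply: le_trans (Eq_ge_normconst Plam Slam Z4).
by rewrite lee_fin ler_pdivrMr //; lra.
Qed.
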